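(* The Drury-Arveson shift $DA=(T_1,T_2)$ is not semi-hyponormal.
   Context: $DA$ is the 2-variable weighted shift on $\ell^2(\mathbb{Z}_+^2)$ (orthonormal basis $\{e_{\mathbf{k}}\}$) given by $T_1e_{(k_1,k_2)}=\sqrt{\frac{k_1+1}{k_1+k_2+1}}\,e_{(k_1+1,k_2)}$ and $T_2e_{(k_1,k_2)}=\sqrt{\frac{k_2+1}{k_1+k_2+1}}\,e_{(k_1,k_2+1)}$. For a commuting pair $(T_1,T_2)$ let $L=\begin{pmatrix} T_1^*T_1 & T_2^*T_1\\ T_1^*T_2 & T_2^*T_2\end{pmatrix}$ and $R=\begin{pmatrix} T_1T_1^* & T_1T_2^*\\ T_2T_1^* & T_2T_2^*\end{pmatrix}$ acting on $\mathcal{H}\oplus\mathcal{H}$; the pair is semi-hyponormal if $L\ge0$ and $\sqrt{L}\ge\sqrt{R}$ (positive square roots). *)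

From HB Require Import structures.
From mathcomp Require Import all_boot all_order all_algebra.
From mathcomp Require Import complex.
From mathcomp Require Import classical_sets reals constructive_ereal ereal esum.
Set Implicit Arguments. Unset Strict Implicit. Unset Printing Implicit Defensive.
Import Order.TTheory GRing.Theory Num.Theory.
Local Open Scope ring_scope.

Section Hilbert.
Variables (R : realType) (K : choiceType).

Definition sqmod (z : R[i]) : R := complex.Re z ^+ 2 + complex.Im z ^+ 2.

Definition sqnorm (x : K -> R[i]) : \bar R :=
  (\esum_(k in setT) (sqmod (x k))%:E)%E.

Definition l2 (x : K -> R[i]) : Prop := (sqnorm x < +oo)%E.

Definition rsum (f : K -> R) : R :=
  fine (\esum_(k in setT) (Num.max (f k) 0)%:E)%E
  - fine (\esum_(k in setT) (Num.max (- f k) 0)%:E)%E.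

Definition ip (x y : K -> R[i]) : R[i] :=
  (rsum (fun k => complex.Re (x k * (y k)^*))
   +i* rsum (fun k => complex.Im (x k * (y k)^*)))%C.

Definition op := (K -> R[i]) -> (K -> R[i]).

Definition bounded_op (A : op) : Prop :=
  [/\ (forall (a : R[i]) x y, l2 x -> l2 y ->
         A (fun k => a * x k + y k) = (fun k => a * A x k + A y k)),
      (forall x, l2 x -> l2 (A x)) &
      exists M : R, forall x, l2 x -> (sqnorm (A x) <= M%:E * sqnorm x)%E].

Definition op_eq (A B : op) : Prop := forall x, l2 x -> A x = B x.

Definition adjoint (A B : op) : Prop :=
  bounded_op B /\ forall x y, l2 x -> l2 y -> ip (A x) y = ip x (B y).

Definition pos_op (A : op) : Prop :=
  bounded_op A /\ forall x, l2 x -> 0 <= ip (A x) x.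

Definition op_le (A B : op) : Prop := pos_op (fun x k => B x k - A x k).

Definition is_psqrt (S A : op) : Prop := pos_op S /\ op_eq (S \o S) A.

End Hilbert.

Definition I2 := (nat * nat)%type.

(* 2x2 operator matrix on H (+) H, with H (+) H identified with l^2(bool * I2)%type:
   the first summand is indexed by false, the second by true. *)
Definition block2 (R : realType) (A11 A12 A21 A22 : op R I2) : op R (bool * I2)%type :=
  fun z j =>
    let z1 := fun k => z (false, k) in
    let z2 := fun k => z (true, k) in
    if j.1 then A21 z1 j.2 + A22 z2 j.2 else A11 z1 j.2 + A12 z2 j.2.

Definition semi_hyponormal (R : realType) (T1 T2 : op R I2) : Prop :=
  forall T1s T2s : op R I2, adjoint T1 T1s -> adjoint T2 T2s ->
  let Lop := block2 (T1s \o T1) (T2s \o T1) (T1s \o T2) (T2s \o T2) in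
  let Rop := block2 (T1 \o T1s) (T1 \o T2s) (T2 \o T1s) (T2 \o T2s) in
  pos_op Lop /\
  forall SL SR : op R (bool * I2)%type,
    is_psqrt SL Lop -> is_psqrt SR Rop -> op_le SR SL.

(* Drury-Arveson 2-shift:
   T1 e_(k1,k2) = sqrt((k1+1)/(k1+k2+1)) e_(k1+1,k2),
   T2 e_(k1,k2) = sqrt((k2+1)/(k1+k2+1)) e_(k1,k2+1),
   written coordinatewise on families x : I2 -> C. *)
Definition DA1 (R : realType) : op R I2 :=
  fun x k => if k.1 is n.+1 then
      ((Num.sqrt ((n.+1)%:R / (n.+1 + k.2)%:R : R))%:C)%C * x (n, k.2)
    else 0.

Definition DA2 (R : realType) : op R I2 :=
  fun x k => if k.2 is n.+1 then
      ((Num.sqrt ((n.+1)%:R / (k.1 + n.+1)%:R : R))%:C)%C * x (k.1, n)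
    else 0.

From HB Require Import structures.
From mathcomp Require Import all_boot all_order all_algebra.
From mathcomp Require Import complex.
From mathcomp Require Import classical_sets fsbigop reals constructive_ereal ereal esum.
From mathcomp Require Import boolp numfun.
From mathcomp Require Import ring lra zify.
Set Implicit Arguments. Unset Strict Implicit. Unset Printing Implicit Defensive.
Import Order.TTheory GRing.Theory Num.Theory.
Local Open Scope ring_scope.

(* Let N be the degree k1 + k2 of an index, D = (N + 1)^-1, and let
   V : l2(Z+^2) -> l2(Z+^2) (+) l2(Z+^2) be the isometry
   e_m |-> (beta_1(m) e_(m+u1), beta_2(m) e_(m+u2)), where u1, u2 are the unit
   vectors of Z+^2 and beta_i(m)^2 = (m_i + 1)/(N m + 2).  A direct computation
   gives L = D + P and R = (N + 1)/N P, where P = V V^* is an orthogonal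
   projection commuting with every function of N.  Hence
   sqrt L = sqrt D + (sqrt (D + 1) - sqrt D) P and sqrt R = sqrt ((N + 1)/N) P,
   and on the degree-one vector x = V e_(0,0), which P fixes,
   <(sqrt L - sqrt R) x, x> = sqrt (3/2) - sqrt 2 < 0. *)

(** * Sums of real and complex families *)

Section ExtendedSums.
Variables (R : realType) (K : choiceType).
Implicit Types (f g a b : K -> R).

Definition esumT f : \bar R := (\esum_(k in setT) (f k)%:E)%E.

Definition abs_summable f := (esumT (fun k => `|f k|%R) < +oo)%E.

Lemma esumT_ge0 f : (forall k, 0 <= f k) -> (0 <= esumT f)%E.
Proof. by move=> f0; apply: esum_ge0 => k _; rewrite lee_fin. Qed.

Lemma le_esumT f g : (forall k, f k <= g k) -> (esumT f <= esumT g)%E.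
Proof. by move=> fg; apply: le_esum => k _; rewrite lee_fin. Qed.

Lemma esumTD f g : (forall k, 0 <= f k) -> (forall k, 0 <= g k) ->
  esumT (fun k => f k + g k) = (esumT f + esumT g)%E.
Proof. by move=> f0 g0; rewrite /esumT -esumD // => k _; rewrite lee_fin. Qed.

Lemma esumTZ (c : R) f : 0 <= c -> (forall k, 0 <= f k) ->
  esumT (fun k => c * f k) = (c%:E * esumT f)%E.
Proof.
move=> c0 f0; rewrite /esumT /esum -ereal_supZl //; last first.
  by apply/set0P; exists 0%E, set0; [split | rewrite fsbig_set0].
have sumZ (A : set K) :
    (\sum_(k \in A) (c * f k)%:E = c%:E * \sum_(k \in A) (f k)%:E)%E.
  by rewrite ge0_mule_fsumr => [|k]; [apply: eq_fsbigr => k _ | rewrite lee_fin].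
congr ereal_sup; apply/seteqP; split => [_ [A fA <-] | _ [_ [A fA <-] <-]].
  by exists (\sum_(k \in A) (f k)%:E)%E; [exists A | rewrite sumZ].
by exists A; rewrite ?sumZ.
Qed.

Lemma esumT0 f : (forall k, f k = 0) -> esumT f = 0%E.
Proof. by move=> f0; rewrite /esumT esum1 // => k _; rewrite f0. Qed.

Lemma esumT_fin f : (forall k, 0 <= f k) -> (esumT f < +oo)%E ->
  esumT f = (fine (esumT f))%:E.
Proof. by move=> f0 fin; rewrite fineK // ge0_fin_numE // esumT_ge0. Qed.

Lemma esumT_restrict (A : set K) f : (forall k, ~ A k -> f k = 0) ->
  esumT f = (\esum_(k in A) (f k)%:E)%E.
Proof.
move=> fA; rewrite /esumT (esum_mkcond A); apply: eq_esum => k _.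
by case: ifPn => // /negP; rewrite in_setE => /fA ->.
Qed.

Lemma esumT1 (a : K) f : (forall k, k <> a -> f k = 0) -> 0 <= f a ->
  esumT f = (f a)%:E.
Proof.
by move=> fa f0; rewrite (@esumT_restrict [set a]) ?esum_set1 // => k /fa.
Qed.

Lemma esumT_summable a : (forall k, 0 <= a k) -> (esumT a < +oo)%E ->
  summable setT (fun k => (a k)%:E).
Proof.
move=> a0; apply: le_lt_trans; apply: le_esum => k _.
by rewrite abse_EFin ger0_norm.
Qed.

End ExtendedSums.

Section RealSums.
Variables (R : realType) (K : choiceType).
Implicit Types (f g a b : K -> R).

Lemma rsumE f : rsum f = fine (esumT f^\+) - fine (esumT f^\-).
Proof. by []. Qed.

Lemma funrposBneg_pt f k : f^\+ k - f^\- k = f k.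
Proof. by have /(congr1 (fun h => h k)) := funrposBneg f. Qed.

Lemma funrpos_le_norm f k : f^\+ k <= `|f k|.
Proof.
have /(congr1 (fun h => h k)) /= <- := funrposDneg f.
by rewrite lerDl funrneg_ge0.
Qed.

Lemma funrneg_le_norm f k : f^\- k <= `|f k|.
Proof.
have /(congr1 (fun h => h k)) /= <- := funrposDneg f.
by rewrite lerDr funrpos_ge0.
Qed.

Lemma funrpos0 f k : f k = 0 -> f^\+ k = 0.
Proof. by rewrite /funrpos => ->; rewrite maxxx. Qed.

Lemma funrneg0 f k : f k = 0 -> f^\- k = 0.
Proof. by rewrite /funrneg => ->; rewrite oppr0 maxxx. Qed.

Lemma abs_summable_funrpos f : abs_summable f -> (esumT (f^\+)%R < +oo)%E.
Proof. by apply: le_lt_trans; apply: le_esumT => k; apply: funrpos_le_norm. Qed.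

Lemma abs_summable_funrneg f : abs_summable f -> (esumT (f^\-)%R < +oo)%E.
Proof. by apply: le_lt_trans; apply: le_esumT => k; apply: funrneg_le_norm. Qed.

Lemma rsum_diff a b : (forall k, 0 <= a k) -> (forall k, 0 <= b k) ->
  (esumT a < +oo)%E -> (esumT b < +oo)%E ->
  rsum (fun k => a k - b k) = fine (esumT a) - fine (esumT b).
Proof.
move=> a0 b0 afin bfin; set f := fun k => a k - b k.
have pfin : (esumT (f^\+)%R < +oo)%E.
  apply: le_lt_trans afin; apply: le_esumT => k.
  by rewrite ge_max a0 lerBlDr lerDl b0.
have nfin : (esumT (f^\-)%R < +oo)%E.
  apply: le_lt_trans bfin; apply: le_esumT => k.
  by rewrite ge_max b0 opprB lerBlDr lerDl a0.
have := esumB (esumT_summable a0 afin) (esumT_summable b0 bfin)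
  (fun k _ => a0 k) (fun k _ => b0 k).
rewrite (_ : esum _ _ = esumT f^\+); last first.
  by apply: eq_esum => k _; rewrite funeposE EFin_max EFinB.
rewrite (_ : esum _ _ = esumT f^\-); last first.
  by apply: eq_esum => k _; rewrite funenegE EFin_max EFinN EFinB.
rewrite -/(esumT a) -/(esumT b) => posneg.
by rewrite rsumE -!fineB ?posneg // ge0_fin_numE ?esumT_ge0.
Qed.

Lemma rsumD f g : abs_summable f -> abs_summable g ->
  rsum (fun k => f k + g k) = rsum f + rsum g.
Proof.
move=> fs gs.
have pf0 := funrpos_ge0 f; have nf0 := funrneg_ge0 f.
have pg0 := funrpos_ge0 g; have ng0 := funrneg_ge0 g.
have pD0 k : 0 <= f^\+ k + g^\+ k by rewrite addr_ge0.
have nD0 k : 0 <= f^\- k + g^\- k by rewrite addr_ge0.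
have pf := abs_summable_funrpos fs; have nf := abs_summable_funrneg fs.
have pg := abs_summable_funrpos gs; have ng := abs_summable_funrneg gs.
rewrite (_ : (fun k => _) = fun k => (f^\+ k + g^\+ k) - (f^\- k + g^\- k)).
  rewrite rsum_diff ?esumTD ?lte_add_pinfty //.
  rewrite (esumT_fin pf0 pf) (esumT_fin nf0 nf) (esumT_fin pg0 pg) (esumT_fin ng0 ng).
  by rewrite -!EFinD /= !rsumE; lra.
by apply: funext => k; rewrite -(funrposBneg_pt f k) -(funrposBneg_pt g k); lra.
Qed.

Lemma rsum_ge0 f : (forall k, 0 <= f k) -> 0 <= rsum f.
Proof.
move=> f0; rewrite rsumE (@esumT0 _ _ f^\-) ?subr0 => [|k]; last first.
  by have /(_ k) := ge0_funrnegE (D := setT) (fun k _ => f0 k); rewrite in_setE; apply.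
by apply/fine_ge0/esumT_ge0 => k; apply: funrpos_ge0.
Qed.

Lemma rsum0 f : (forall k, f k = 0) -> rsum f = 0.
Proof.
move=> f0; rewrite rsumE !esumT0 ?subrr // => k; [exact: funrneg0 | exact: funrpos0].
Qed.

Lemma rsum1 (a : K) f : (forall k, k <> a -> f k = 0) -> rsum f = f a.
Proof.
move=> fa; rewrite rsumE (@esumT1 _ _ a f^\+) ?(@esumT1 _ _ a f^\-).
- by rewrite funrposBneg_pt.
- by move=> k /fa /funrneg0.
- exact: funrneg_ge0.
- by move=> k /fa /funrpos0.
- exact: funrpos_ge0.
Qed.

End RealSums.

Section Reindex.
Variables (R : realType) (K K' : choiceType) (e : K' -> K).
Hypothesis e_inj : injective e.
Implicit Types (f : K -> R).

Lemma esumT_reindex f : (forall k, ~ range e k -> f k = 0) ->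
  esumT f = esumT (fun m => f (e m)).
Proof.
move=> f_range; rewrite (esumT_restrict f_range) /esumT.
by rewrite (esum_image _ e (fun k => (f k)%:E)) // => m m' _ _ /e_inj.
Qed.

Lemma esumT_comp_le f : (forall k, 0 <= f k) ->
  (esumT (fun m => f (e m)) <= esumT f)%E.
Proof.
move=> f0; rewrite /esumT -(esum_image _ e (fun k => (f k)%:E)) => [|m m' _ _ /e_inj //].
by rewrite (esum_mkcond (e @` setT)); apply: le_esum => k _; case: ifP; rewrite lee_fin.
Qed.

Lemma rsum_reindex f : (forall k, ~ range e k -> f k = 0) ->
  rsum f = rsum (fun m => f (e m)).
Proof.
move=> f_range; rewrite !rsumE (@esumT_reindex f^\+) => [|k /f_range /funrpos0 //].
by rewrite (@esumT_reindex f^\-) => [|k /f_range /funrneg0 //].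
Qed.

End Reindex.

Local Open Scope complex_scope.

Section ComplexSums.
Variables (R : realType) (K : choiceType).
Local Notation C := R[i].
Implicit Types (h : K -> C) (x y z : K -> C).

Definition csum h : C :=
  (rsum (fun k => complex.Re (h k)) +i* rsum (fun k => complex.Im (h k)))%C.

Definition csummable h :=
  abs_summable (fun k => complex.Re (h k)) /\ abs_summable (fun k => complex.Im (h k)).

Lemma ipE x y : ip x y = csum (fun k => x k * (y k)^*).
Proof. by []. Qed.

Lemma csumD h1 h2 : csummable h1 -> csummable h2 ->
  csum (fun k => h1 k + h2 k) = csum h1 + csum h2.
Proof.
move=> [re1 im1] [re2 im2]; rewrite /csum.
have -> : (fun k => complex.Re (h1 k + h2 k)) =
  (fun k => complex.Re (h1 k) + complex.Re (h2 k)) by apply: funext => k; rewrite raddfD.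
have -> : (fun k => complex.Im (h1 k + h2 k)) =
  (fun k => complex.Im (h1 k) + complex.Im (h2 k)) by apply: funext => k; rewrite raddfD.
by rewrite !rsumD //; simpc.
Qed.

Lemma csum1 (a : K) h : (forall k, k <> a -> h k = 0) -> csum h = h a.
Proof.
by move=> ha; rewrite /csum !(@rsum1 _ _ a) => [|k /ha ->|k /ha ->]; case: (h a).
Qed.

Lemma csum_ge0 h : (forall k, 0 <= h k) -> 0 <= csum h.
Proof.
move=> h0; have hP k : complex.Im (h k) = 0 /\ 0 <= complex.Re (h k).
  by have := h0 k; rewrite lecE => /andP[/eqP].
rewrite /csum lecE /= rsum0 ?eqxx /= => [|k]; last by case: (hP k).
by apply: rsum_ge0 => k; case: (hP k).
Qed.

End ComplexSums.

Lemma csum_reindex (R : realType) (K K' : choiceType) (e : K' -> K) (h : K -> R[i]) :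
  injective e -> (forall k, ~ range e k -> h k = 0) ->
  csum h = csum (fun m => h (e m)).
Proof.
move=> e_inj h_range; rewrite /csum.
by rewrite !(@rsum_reindex _ _ _ e) // => k /h_range ->.
Qed.

Section SquareSummable.
Variables (R : realType) (K : choiceType).
Local Notation C := R[i].
Implicit Types (x y z : K -> C).

Lemma sqmod_ge0 (u : C) : 0 <= sqmod u.
Proof. by rewrite addr_ge0 // sqr_ge0. Qed.

Lemma sqmod0 : sqmod (0 : C) = 0.
Proof. by rewrite /sqmod /= expr0n addr0. Qed.

Lemma sqmodM (u v : C) : sqmod (u * v) = sqmod u * sqmod v.
Proof. by case: u => a b; case: v => c d; rewrite /sqmod /=; ring. Qed.

Lemma sqmod_real (r : R) : sqmod r%:C = r ^+ 2.
Proof. by rewrite /sqmod /= expr0n addr0. Qed.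

Lemma sqmod_wmul_le (r M : R) (v : C) :
  `|r| <= M -> sqmod (r%:C * v) <= M ^+ 2 * sqmod v.
Proof.
move=> rM; rewrite sqmodM sqmod_real ler_wpM2r ?sqmod_ge0 //.
by rewrite -real_normK ?num_real // lerXn2r ?nnegrE ?(le_trans _ rM).
Qed.

Lemma conj_wmul (r : R) (v : C) : Num.conj (r%:C * v) = r%:C * Num.conj v.
Proof. by case: v => a b; rewrite /Num.conj /=; simpc. Qed.

Lemma sqmodD_le (u v : C) : sqmod (u + v) <= 2 * (sqmod u + sqmod v).
Proof.
case: u => a b; case: v => c d; rewrite /sqmod /=.
by have := sqr_ge0 (a - c); have := sqr_ge0 (b - d); rewrite !expr2; nra.
Qed.

Lemma sqnorm_ge0 x : (0 <= sqnorm x)%E.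
Proof. by apply: esumT_ge0 => k; apply: sqmod_ge0. Qed.

Lemma sqnorm_fin x : l2 x -> sqnorm x = (fine (sqnorm x))%:E.
Proof. by move=> x2; rewrite fineK // ge0_fin_numE // sqnorm_ge0. Qed.

Lemma sqnormD_le x y : l2 x -> l2 y ->
  (sqnorm (fun k => x k + y k)%R <= (2 * (fine (sqnorm x) + fine (sqnorm y)))%:E)%E.
Proof.
move=> x2 y2; set a := fun k => sqmod (x k); set b := fun k => sqmod (y k).
have a0 k : 0 <= a k := sqmod_ge0 _; have b0 k : 0 <= b k := sqmod_ge0 _.
apply: (@le_trans _ _ (esumT (fun k => (a k + a k) + (b k + b k)))).
  by apply: le_esumT => k; have := sqmodD_le (x k) (y k); rewrite -/(a k) -/(b k); lra.
rewrite esumTD => [|k|k]; last 2 first.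
- exact: addr_ge0.
- exact: addr_ge0.
rewrite !(esumTD a0 a0) !(esumTD b0 b0) -[esumT a]/(sqnorm x) -[esumT b]/(sqnorm y).
by rewrite (sqnorm_fin x2) (sqnorm_fin y2) -!EFinD lee_fin /=; lra.
Qed.

Lemma l2_pt (a : K) x : (forall k, k <> a -> x k = 0) -> l2 x.
Proof.
move=> xa; rewrite /l2 /sqnorm -/(esumT _) (@esumT1 _ _ a) ?ltry ?sqmod_ge0 //.
by move=> k /xa ->; rewrite sqmod0.
Qed.

Lemma csummable_l2 x y : l2 x -> l2 y -> csummable (fun k => x k * (y k)^*).
Proof.
move=> x2 y2.
have xy2 : (esumT (fun k => sqmod (x k) + sqmod (y k))%R < +oo)%E.
  by rewrite esumTD ?lte_add_pinfty // => k; apply: sqmod_ge0.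
split; apply: le_lt_trans xy2; apply: le_esumT => k; rewrite /sqmod;
  case: (x k) => a b; case: (y k) => c d; rewrite /= ler_norml; apply/andP;
  have := sqr_ge0 (a - c); have := sqr_ge0 (b - d); have := sqr_ge0 (a + c);
  have := sqr_ge0 (b + d); have := sqr_ge0 (a - d); have := sqr_ge0 (b - c);
  have := sqr_ge0 (a + d); have := sqr_ge0 (b + c); rewrite !expr2; split; nra.
Qed.

Lemma ipDl x y z : l2 x -> l2 y -> l2 z ->
  ip (fun k => x k + y k) z = ip x z + ip y z.
Proof.
move=> x2 y2 z2; rewrite !ipE -csumD; try exact: csummable_l2.
by congr csum; apply: funext => k; rewrite mulrDl.
Qed.

Lemma ipDr x y z : l2 x -> l2 y -> l2 z ->
  ip x (fun k => y k + z k) = ip x y + ip x z.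
Proof.
move=> x2 y2 z2; rewrite !ipE -csumD; try exact: csummable_l2.
by congr csum; apply: funext => k; rewrite rmorphD mulrDr.
Qed.

Lemma ip_wmul_ge0 (w : K -> R) x : (forall k, 0 <= w k) ->
  0 <= ip (fun k => (w k)%:C * x k) x.
Proof.
move=> w0; rewrite ipE; apply: csum_ge0 => k.
by rewrite -mulrA mulr_ge0 ?mulcJ_ge0 // lecR.
Qed.

End SquareSummable.

(** * Bounded maps and weighted shifts *)

Section BoundedMaps.
Variable R : realType.
Local Notation C := R[i].

Definition bounded_map (K K' : choiceType) (A : (K' -> C) -> (K -> C)) : Prop :=
  [/\ (forall (a : C) x y, l2 x -> l2 y ->
         A (fun k => a * x k + y k) = (fun k => a * A x k + A y k)),
      (forall x, l2 x -> l2 (A x)) &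
      exists M : R, forall x, l2 x -> (sqnorm (A x) <= M%:E * sqnorm x)%E].

Section OneMap.
Variables (K K' : choiceType) (A : (K' -> C) -> (K -> C)).

Lemma bounded_mapP :
  (forall (a : C) x y, l2 x -> l2 y ->
     A (fun k => a * x k + y k) = (fun k => a * A x k + A y k)) ->
  (exists M : R, forall x, l2 x -> (sqnorm (A x) <= (M * fine (sqnorm x))%:E)%E) ->
  bounded_map A.
Proof.
move=> A_lin [M AM]; split => //.
  by move=> x x2; apply: le_lt_trans (AM x x2) _; rewrite ltry.
by exists M => x x2; rewrite (sqnorm_fin x2) -EFinM; apply: AM.
Qed.

Hypothesis A_bnd : bounded_map A.

Lemma bounded_map_linear (a : C) x y : l2 x -> l2 y ->
  A (fun k => a * x k + y k) = (fun k => a * A x k + A y k).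
Proof. by case: A_bnd => A_lin _ _; apply: A_lin. Qed.

Lemma bounded_map_l2 x : l2 x -> l2 (A x).
Proof. by case: A_bnd => _ A2 _; apply: A2. Qed.

Lemma bounded_map_bound : exists2 M : R, 0 <= M &
  forall x, l2 x -> fine (sqnorm (A x)) <= M * fine (sqnorm x).
Proof.
case: A_bnd => _ A2 [M AM]; exists (Num.max M 0) => [|x x2].
  by rewrite le_max lexx orbT.
have := AM x x2; rewrite (sqnorm_fin (A2 x x2)) (sqnorm_fin x2) -EFinM lee_fin.
by move/le_trans; apply; rewrite ler_wpM2r ?fine_ge0 ?sqnorm_ge0 // le_max lexx.
Qed.

End OneMap.

Lemma bounded_mapD (K K' : choiceType) (A B : (K' -> C) -> (K -> C)) :
  bounded_map A -> bounded_map B -> bounded_map (fun x k => A x k + B x k).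
Proof.
move=> Ab Bb; apply: bounded_mapP.
  move=> a x y x2 y2.
  rewrite (bounded_map_linear Ab a x2 y2) (bounded_map_linear Bb a x2 y2).
  by apply: funext => k; ring.
have [MA _ AM] := bounded_map_bound Ab; have [MB _ BM] := bounded_map_bound Bb.
exists (2 * (MA + MB)) => x x2.
apply: le_trans (sqnormD_le (bounded_map_l2 Ab x2) (bounded_map_l2 Bb x2)) _.
by rewrite lee_fin; have := AM x x2; have := BM x x2; lra.
Qed.

Lemma bounded_map_comp (K K' K'' : choiceType) (A : (K' -> C) -> (K -> C))
  (B : (K'' -> C) -> (K' -> C)) :
  bounded_map A -> bounded_map B -> bounded_map (fun x => A (B x)).
Proof.
move=> Ab Bb; apply: bounded_mapP.
  move=> a x y x2 y2; rewrite (bounded_map_linear Bb a x2 y2).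
  by rewrite (bounded_map_linear Ab a (bounded_map_l2 Bb x2) (bounded_map_l2 Bb y2)).
have [MA MA0 AM] := bounded_map_bound Ab; have [MB MB0 BM] := bounded_map_bound Bb.
exists (MA * MB) => x x2; have Bx2 := bounded_map_l2 Bb x2.
rewrite (sqnorm_fin (bounded_map_l2 Ab Bx2)) lee_fin -mulrA.
exact: le_trans (AM _ Bx2) (ler_wpM2l MA0 (BM x x2)).
Qed.

End BoundedMaps.

Section WeightedComposition.
Variables (R : realType) (K K' : choiceType).
Local Notation C := R[i].

Definition wshift (w : K -> R) (e : K -> K') (x : K' -> C) (k : K) : C :=
  (w k)%:C * x (e k).

Lemma bounded_wshift (w : K -> R) (e : K -> K') (M : R) :
  injective e -> (forall k, `|w k| <= M) -> bounded_map (wshift w e).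
Proof.
move=> e_inj wM; apply: bounded_mapP => [a x y _ _|].
  by apply: funext => k; rewrite /wshift; ring.
exists (M ^+ 2) => x x2; rewrite EFinM -(sqnorm_fin x2).
have x0 k : 0 <= sqmod (x k) := sqmod_ge0 _.
apply: (@le_trans _ _ (esumT (fun k => M ^+ 2 * sqmod (x (e k))))).
  by apply: le_esumT => k; apply: sqmod_wmul_le.
rewrite esumTZ ?sqr_ge0 // lee_wpmul2l ?lee_fin ?sqr_ge0 //.
exact: (@esumT_comp_le _ _ _ e e_inj (fun k' => sqmod (x k'))).
Qed.

End WeightedComposition.

Section PartialShift.
Variables (R : realType) (K K' : choiceType).
Local Notation C := R[i].

(* With [pcancel e u] and [ocancel u e], [u] inverts the injection [e] on its
   range and is [None] off it, so [pshift w u] is the weighted shift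
   [e_m |-> w m e_(e m)]. *)
Definition pshift (w : K' -> R) (u : K -> option K') (y : K' -> C) (k : K) : C :=
  if u k is Some m then (w m)%:C * y m else 0.

Variables (u : K -> option K') (e : K' -> K).
Hypotheses (eK : pcancel e u) (uK : ocancel u e).

Lemma pshift_out (w : K' -> R) y k : ~ range e k -> pshift w u y k = 0.
Proof.
rewrite /pshift; case Eu: (u k) => [m|] // k_out; case: k_out; exists m => //.
by have := uK k; rewrite Eu.
Qed.

Lemma pshift_range (w : K' -> R) y m : pshift w u y (e m) = (w m)%:C * y m.
Proof. by rewrite /pshift eK. Qed.

Lemma bounded_pshift (w : K' -> R) (M : R) :
  (forall m, `|w m| <= M) -> bounded_map (pshift w u).
Proof.
move=> wM; apply: bounded_mapP => [a x y _ _|].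
  by apply: funext => k; rewrite /pshift; case: (u k) => [m|]; ring.
exists (M ^+ 2) => y y2; rewrite EFinM -(sqnorm_fin y2) -esumTZ ?sqr_ge0 //;
  last by move=> m; apply: sqmod_ge0.
rewrite -[sqnorm _]/(esumT (fun k => sqmod (pshift w u y k))).
rewrite (@esumT_reindex _ _ _ e (pcan_inj eK)) => [|k /pshift_out ->]; last exact: sqmod0.
by apply: le_esumT => m; rewrite pshift_range; apply: sqmod_wmul_le.
Qed.

Lemma ip_pshift (w : K' -> R) y z : ip (pshift w u y) z = ip y (wshift w e z).
Proof.
rewrite !ipE (@csum_reindex _ _ _ e) => [|m m' /(pcan_inj eK) //|k /pshift_out ->].
  congr csum; apply: funext => m.
  by rewrite pshift_range /wshift conj_wmul; ring.
by rewrite mul0r.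
Qed.

End PartialShift.

Lemma adjoint_pshift (R : realType) (K : choiceType) (w : K -> R) (M : R)
    (u : K -> option K) (e : K -> K) :
  pcancel e u -> ocancel u e -> (forall k, `|w k| <= M) ->
  adjoint (pshift w u) (wshift w e).
Proof.
move=> eK uK wM; split; first exact: bounded_wshift (pcan_inj eK) wM.
by move=> x y _ _; apply: ip_pshift.
Qed.

(** * The Drury-Arveson shift *)

Definition deg (m : I2) : nat := (m.1 + m.2)%N.
Definition coord (i : bool) (m : I2) : nat := if i then m.2 else m.1.
Definition shift_at (i : bool) (m : I2) : I2 :=
  if i then (m.1, m.2.+1) else (m.1.+1, m.2).
Definition unshift_at (i : bool) (k : I2) : option I2 :=
  if i then (if k.2 is n.+1 then Some (k.1, n) else None)
  else (if k.1 is n.+1 then Some (n, k.2) else None).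

Lemma shift_atK i : pcancel (shift_at i) (unshift_at i).
Proof. by case: i => -[]. Qed.

Lemma unshift_atK i : ocancel (unshift_at i) (shift_at i).
Proof. by case: i => -[[|?] [|?]]. Qed.

Definition jshift_at (i : bool) (m : I2) : bool * I2 := (i, shift_at i m).
Definition junshift_at (i : bool) (j : bool * I2) : option I2 :=
  if j.1 == i then unshift_at i j.2 else None.

Lemma jshift_atK i : pcancel (jshift_at i) (junshift_at i).
Proof. by move=> m; rewrite /junshift_at eqxx shift_atK. Qed.

Lemma junshift_atK i : ocancel (junshift_at i) (jshift_at i).
Proof.
case=> b k; rewrite /junshift_at /=; case: eqP => [->|] //=.
by have := unshift_atK i k; case: (unshift_at i k) => //= m <-.
Qed.

Section DruryArveson.
Variable R : realType.
Local Notation C := R[i].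
Local Notation J := (bool * I2)%type.

Lemma ratio_ge0 (p q : nat) : 0 <= (p%:R / q%:R : R).
Proof. by rewrite divr_ge0 ?ler0n. Qed.

Lemma sqrt_ratio_le1 (p q : nat) : (p <= q)%N -> `|Num.sqrt (p%:R / q%:R : R)| <= 1.
Proof.
move=> pq; rewrite ger0_norm ?sqrtr_ge0 // -[X in _ <= X]sqrtr1; apply: ler_wsqrtr.
have [->|q0] := posnP q; first by rewrite invr0 mulr0.
by rewrite ler_pdivrMr ?ltr0n // mul1r ler_nat.
Qed.

Lemma sqrt_ratio_le2 (p q : nat) : (0 < q -> p <= 4 * q)%N ->
  Num.sqrt (p%:R / q%:R : R) <= 2.
Proof.
move=> pq; rewrite -(@ger0_norm _ 2) // -sqrtr_sqr ler_wsqrtr //.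
have [->|q0] := posnP q; first by rewrite invr0 mulr0.
by rewrite ler_pdivrMr ?ltr0n // -natrX -natrM ler_nat; have := pq q0; lia.
Qed.

Definition da_weight (i : bool) (m : I2) : R :=
  Num.sqrt ((coord i m).+1%:R / (deg m).+1%:R).

Lemma da_weight_le1 i m : `|da_weight i m| <= 1.
Proof. by apply: sqrt_ratio_le1; case: i; rewrite /deg /=; lia. Qed.

Lemma DA1E : @DA1 R = pshift (da_weight false) (unshift_at false).
Proof. by apply: funext => x; apply: funext => -[[|n] k]. Qed.

Lemma DA2E : @DA2 R = pshift (da_weight true) (unshift_at true).
Proof.
apply: funext => x; apply: funext => -[k [|n]] //.
by rewrite /DA2 /pshift /da_weight /deg /= addnS.
Qed.

Definition DAadj (i : bool) : op R I2 := wshift (da_weight i) (shift_at i).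

Lemma adjoint_DA i : adjoint (pshift (da_weight i) (unshift_at i)) (DAadj i).
Proof. exact: adjoint_pshift (shift_atK i) (unshift_atK i) (da_weight_le1 i). Qed.

Lemma adjoint_DA1 : adjoint (@DA1 R) (DAadj false).
Proof. by rewrite DA1E; apply: adjoint_DA. Qed.

Lemma adjoint_DA2 : adjoint (@DA2 R) (DAadj true).
Proof. by rewrite DA2E; apply: adjoint_DA. Qed.

Definition beta (i : bool) (m : I2) : R := Num.sqrt ((coord i m).+1%:R / (deg m).+2%:R).

Lemma beta_le1 i m : `|beta i m| <= 1.
Proof. by apply: sqrt_ratio_le1; case: i; rewrite /deg /=; lia. Qed.

Lemma beta_sqr_sum m : beta false m ^+ 2 + beta true m ^+ 2 = 1.
Proof.
rewrite !sqr_sqrtr ?ratio_ge0 // -mulrDl -natrD /deg /=.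
by rewrite addSn addnS divff // pnatr_eq0.
Qed.

Lemma da_weight_sqr i m : da_weight i m ^+ 2 = (coord i m).+1%:R / (deg m).+1%:R.
Proof. by rewrite sqr_sqrtr ?ratio_ge0. Qed.

Lemma da_weight_shiftN i m : da_weight i (shift_at (~~ i) m) = beta i m.
Proof. by case: i; rewrite /da_weight /beta /deg /= ?addnS ?addSn. Qed.

Lemma da_weight_shift_sqr i m :
  da_weight i (shift_at i m) ^+ 2 = ((deg m).+2%:R)^-1 + beta i m ^+ 2.
Proof.
rewrite da_weight_sqr sqr_sqrtr ?ratio_ge0 // -[X in X + _]mul1r -mulrDl nat1r.
by case: i; rewrite /deg /= ?addnS ?addSn.
Qed.

Lemma da_weight_beta i m :
  da_weight i m = Num.sqrt ((deg m).+2%:R / (deg m).+1%:R) * beta i m.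
Proof.
rewrite -sqrtrM ?ratio_ge0 //; congr Num.sqrt.
by rewrite [RHS]mulrCA mulrAC divff ?mul1r // pnatr_eq0.
Qed.

Definition V (y : I2 -> C) (j : J) : C :=
  pshift (beta false) (junshift_at false) y j + pshift (beta true) (junshift_at true) y j.

Definition Vadj (z : J -> C) (m : I2) : C :=
  wshift (beta false) (jshift_at false) z m + wshift (beta true) (jshift_at true) z m.

Definition P (z : J -> C) : J -> C := V (Vadj z).

Lemma bounded_V : bounded_map V.
Proof.
exact: bounded_mapD
  (bounded_pshift (jshift_atK false) (junshift_atK false) (beta_le1 false))
  (bounded_pshift (jshift_atK true) (junshift_atK true) (beta_le1 true)).
Qed.

Lemma bounded_Vadj : bounded_map Vadj.
Proof.
exact: bounded_mapD (bounded_wshift (pcan_inj (jshift_atK false)) (beta_le1 false))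
  (bounded_wshift (pcan_inj (jshift_atK true)) (beta_le1 true)).
Qed.

Lemma bounded_P : bounded_map P.
Proof. exact: bounded_map_comp bounded_V bounded_Vadj. Qed.

Lemma ip_V (y : I2 -> C) (z : J -> C) : l2 y -> l2 z -> ip (V y) z = ip y (Vadj z).
Proof.
move=> y2 z2.
have l2p i := bounded_map_l2
  (bounded_pshift (jshift_atK i) (junshift_atK i) (beta_le1 i)).
have l2w i := bounded_map_l2 (bounded_wshift (pcan_inj (jshift_atK i)) (beta_le1 i)).
have -> : ip (V y) z = ip (pshift (beta false) (junshift_at false) y) z
                       + ip (pshift (beta true) (junshift_at true) y) z.
  exact: ipDl (l2p false y y2) (l2p true y y2) z2.
rewrite !(ip_pshift (jshift_atK _) (junshift_atK _)).
exact: esym (ipDr y2 (l2w false z z2) (l2w true z z2)).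
Qed.

Lemma Vadj_V (y : I2 -> C) : Vadj (V y) = y.
Proof.
apply: funext => -[a b].
rewrite /Vadj /wshift /V /jshift_at /pshift /junshift_at /= addr0 add0r.
by rewrite !mulrA -!rmorphM -mulrDl -rmorphD -!expr2 beta_sqr_sum mul1r.
Qed.

Lemma P_V (y : I2 -> C) : P (V y) = V y.
Proof. by rewrite /P Vadj_V. Qed.

Lemma P_idem (z : J -> C) : P (P z) = P z.
Proof. exact: P_V. Qed.

Lemma P_add (z1 z2 : J -> C) : P (fun j => z1 j + z2 j) = fun j => P z1 j + P z2 j.
Proof.
apply: funext => j; rewrite /P /V /Vadj /pshift /wshift.
by case: (junshift_at false j); case: (junshift_at true j) => *; ring.
Qed.

Definition degmul (phi : nat -> R) (z : J -> C) (j : J) : C := (phi (deg j.2))%:C * z j.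

Lemma bounded_degmul (phi : nat -> R) (M : R) :
  (forall n, `|phi n| <= M) -> bounded_map (degmul phi).
Proof. by move=> phiM; apply: (@bounded_wshift _ _ _ _ id M) => // j. Qed.

(* [V] raises the degree by one. *)
Lemma V_degmul (phi : nat -> R) (y : I2 -> C) :
  V (fun m => (phi (deg m).+1)%:C * y m) = degmul phi (V y).
Proof.
apply: funext => -[[]] [a b]; [case: b => [|b] | case: a => [|a]];
  by rewrite /V /degmul /pshift /junshift_at /deg /=
    ?mulr0 ?addr0 ?add0r ?addnS ?addSn //; ring.
Qed.

Lemma Vadj_degmul (phi : nat -> R) (z : J -> C) :
  Vadj (degmul phi z) = fun m => (phi (deg m).+1)%:C * Vadj z m.
Proof.
apply: funext => -[a b]; rewrite /Vadj /degmul /wshift /deg /= addnS mulrDr.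
by congr (_ + _); rewrite mulrCA.
Qed.

Lemma P_degmul (phi : nat -> R) (z : J -> C) : P (degmul phi z) = degmul phi (P z).
Proof. by rewrite /P Vadj_degmul V_degmul. Qed.

Definition degcomb (a c : nat -> R) (z : J -> C) (j : J) : C :=
  degmul a z j + degmul c (P z) j.

Lemma degcomb_sqr (a c : nat -> R) (z : J -> C) :
  degcomb a c (degcomb a c z) =
  degcomb (fun n => a n ^+ 2) (fun n => (a n *+ 2 + c n) * c n) z.
Proof.
rewrite {1}/degcomb P_add P_degmul P_degmul P_idem.
by apply: funext => j; rewrite /degcomb /degmul mulr2n !rmorphM !rmorphD /=; ring.
Qed.

Lemma degcombB (a c a' c' : nat -> R) (z : J -> C) :
  (fun j => degcomb a c z j - degcomb a' c' z j) =
  degcomb (fun n => a n - a' n) (fun n => c n - c' n) z.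
Proof. by apply: funext => j; rewrite /degcomb /degmul !rmorphB; ring. Qed.

Lemma bounded_degcomb (a c : nat -> R) (M : R) :
  (forall n, `|a n| <= M) -> (forall n, `|c n| <= M) -> bounded_map (degcomb a c).
Proof.
move=> aM cM.
exact: bounded_mapD (bounded_degmul aM) (bounded_map_comp (bounded_degmul cM) bounded_P).
Qed.

Lemma pos_degcomb (a c : nat -> R) (M : R) :
  (forall n, 0 <= a n <= M) -> (forall n, 0 <= c n <= M) -> pos_op (degcomb a c).
Proof.
move=> aM cM; have [a0 c0] : (forall n, 0 <= a n) /\ (forall n, 0 <= c n).
  by split=> n; [case/andP: (aM n) | case/andP: (cM n)].
have [aM' cM'] : (forall n, `|a n| <= M) /\ (forall n, `|c n| <= M).
  by split=> n; rewrite ger0_norm //; [case/andP: (aM n) | case/andP: (cM n)].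
split; first exact: bounded_degcomb aM' cM'.
move=> z z2; have Vz2 := bounded_map_l2 bounded_Vadj z2.
have cVz2 := bounded_map_l2 (bounded_wshift (@inj_id _) (fun m => cM' (deg m).+1)) Vz2.
rewrite /degcomb ipDl.
- rewrite addr_ge0 //; first exact: ip_wmul_ge0.
  by rewrite /P -V_degmul ip_V //; apply: ip_wmul_ge0.
- by have := bounded_map_l2 (bounded_degmul aM') z2.
- by have := bounded_map_l2 (bounded_degmul cM') (bounded_map_l2 bounded_P z2).
- exact: z2.
Qed.

Lemma DA_L_degcomb (z : J -> C) :
  block2 (DAadj false \o @DA1 R) (DAadj true \o @DA1 R) (DAadj false \o @DA2 R)
    (DAadj true \o @DA2 R) z = degcomb (fun n => (n.+1%:R)^-1) (fun=> 1) z.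
Proof.
rewrite DA1E DA2E; apply: funext => -[[]] [a b]; [case: b => [|b] | case: a => [|a]];
  rewrite /block2 /degcomb /degmul /P /V /Vadj /DAadj /pshift /wshift /junshift_at
    /jshift_at /deg /= ?mulr0 ?add0r ?mul1r ?addr0 ?addnS ?addSn ?addn0 ?add0n.
- by rewrite mulrA -rmorphM -expr2 da_weight_sqr /deg /= addn0 mul1r.
- rewrite (da_weight_shiftN false (a, b)) (da_weight_shiftN true (a, b)).
  rewrite !mulrA -!rmorphM -expr2 (da_weight_shift_sqr true (a, b)) rmorphD /deg /=.
  ring.
- by rewrite mulrA -rmorphM -expr2 da_weight_sqr /deg /= mul1r.
- rewrite (da_weight_shiftN false (a, b)) (da_weight_shiftN true (a, b)).
  rewrite !mulrA -!rmorphM -expr2 (da_weight_shift_sqr false (a, b)) rmorphD /deg /=.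
  ring.
Qed.

(* At degree 0 the coefficient [1 / 0] is Rocq's junk value [0], which is harmless
   because [P] vanishes there. *)
Lemma DA_R_degcomb (z : J -> C) :
  block2 (@DA1 R \o DAadj false) (@DA1 R \o DAadj true) (@DA2 R \o DAadj false)
    (@DA2 R \o DAadj true) z = degcomb (fun=> 0) (fun n => n.+1%:R / n%:R) z.
Proof.
rewrite DA1E DA2E; apply: funext => -[[]] [a b]; [case: b => [|b] | case: a => [|a]];
  rewrite /block2 /degcomb /degmul /P /V /Vadj /DAadj /pshift /wshift /junshift_at
    /jshift_at /deg /= ?mulr0 ?addr0 ?add0r ?mul0r ?addnS ?addSn //;
  try by rewrite mulr0 addr0.
all: rewrite !(da_weight_beta _ (a, b)) /deg /=; set rho := Num.sqrt _.
all: rewrite -(sqr_sqrtr (ratio_ge0 (a + b).+2 (a + b).+1)) -/rho !rmorphM /=; ring.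
Qed.

Definition rootL : (J -> C) -> (J -> C) :=
  degcomb (fun n => Num.sqrt (n.+1%:R^-1))
    (fun n => Num.sqrt (n.+2%:R / n.+1%:R) - Num.sqrt (n.+1%:R^-1)).

Definition rootR : (J -> C) -> (J -> C) :=
  degcomb (fun=> 0) (fun n => Num.sqrt (n.+1%:R / n%:R)).

Lemma is_psqrt_rootL : is_psqrt rootL
  (block2 (DAadj false \o @DA1 R) (DAadj true \o @DA1 R) (DAadj false \o @DA2 R)
    (DAadj true \o @DA2 R)).
Proof.
have inv_sqrt n : Num.sqrt (n.+1%:R^-1) = Num.sqrt (1%:R / n.+1%:R : R).
  by rewrite mul1r.
split.
  apply: (@pos_degcomb _ _ 2) => n; apply/andP; split.
  - exact: sqrtr_ge0.
  - by rewrite inv_sqrt sqrt_ratio_le2 // => _; lia.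
  - by rewrite subr_ge0 inv_sqrt ler_wsqrtr // ler_pM2r ?invr_gt0 ?ltr0n // ler_nat.
  - by rewrite lerBlDr (le_trans (sqrt_ratio_le2 _)) ?lerDl ?sqrtr_ge0 // => _; lia.
move=> z _ /=; rewrite /rootL degcomb_sqr DA_L_degcomb; congr degcomb.
  by apply: funext => n; rewrite sqr_sqrtr // invr_ge0 ler0n.
apply: funext => n; set d := Num.sqrt (n.+1%:R^-1); set s := Num.sqrt (_ / _).
rewrite mulr2n (_ : (d + d + (s - d)) * (s - d) = s ^+ 2 - d ^+ 2); last by ring.
rewrite !sqr_sqrtr ?ratio_ge0 ?invr_ge0 ?ler0n // -[n.+2%:R]natr1 mulrDl mul1r addrK.
by rewrite divff // pnatr_eq0.
Qed.

Lemma is_psqrt_rootR : is_psqrt rootR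
  (block2 (@DA1 R \o DAadj false) (@DA1 R \o DAadj true) (@DA2 R \o DAadj false)
    (@DA2 R \o DAadj true)).
Proof.
split.
  apply: (@pos_degcomb _ _ 2) => n; apply/andP; split.
  - exact: lexx.
  - exact: ler0n.
  - exact: sqrtr_ge0.
  - by rewrite sqrt_ratio_le2 // => n0; lia.
move=> z _ /=; rewrite /rootR degcomb_sqr DA_R_degcomb; congr degcomb.
  by apply: funext => n; rewrite expr0n.
by apply: funext => n; rewrite mul0rn add0r -expr2 sqr_sqrtr ?ratio_ge0.
Qed.

Definition delta0 (m : I2) : C := if m == (0, 0)%N then 1 else 0.

Lemma delta0_out m : m <> (0, 0)%N -> delta0 m = 0.
Proof. by rewrite /delta0 => /eqP/negbTE ->. Qed.

Lemma l2_delta0 : l2 delta0.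
Proof. exact: (@l2_pt R I2 (0, 0)%N _ delta0_out). Qed.

Lemma ip_degcomb_Vdelta0 (a c : nat -> R) :
  ip (degcomb a c (V delta0)) (V delta0) = (a 1%N + c 1%N)%:C.
Proof.
set w := fun m => (a (deg m).+1 + c (deg m).+1)%:C * delta0 m.
have w_out m : m <> (0, 0)%N -> w m = 0.
  by move/delta0_out; rewrite /w => ->; rewrite mulr0.
have -> : degcomb a c (V delta0) = V w.
  rewrite (V_degmul (fun n => a n + c n)); apply: funext => j.
  by rewrite /degcomb P_V /degmul -mulrDl -rmorphD.
rewrite ip_V ?Vadj_V; last 2 first.
- exact: (@l2_pt R I2 (0, 0)%N _ w_out).
- by have := bounded_map_l2 bounded_V l2_delta0.
rewrite ipE (@csum1 _ _ (0, 0)%N) => [|m /w_out ->]; last by rewrite mul0r.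
by rewrite /w /delta0 /= rmorph1 !mulr1.
Qed.

Lemma ip_root_gap :
  ip ((fun z j => rootL z j - rootR z j) (V delta0)) (V delta0) =
  (Num.sqrt (3%:R / 2%:R) - Num.sqrt (2%:R / 1%:R))%:C.
Proof.
by rewrite /= /rootL /rootR degcombB ip_degcomb_Vdelta0; congr (_%:C); ring.
Qed.

End DruryArveson.

Theorem theorem3p18 (R : realType) : ~ semi_hyponormal (@DA1 R) (@DA2 R).
Proof.
move=> /(_ _ _ (adjoint_DA1 R) (adjoint_DA2 R)) [_].
move=> /(_ _ _ (is_psqrt_rootL R) (is_psqrt_rootR R)) [_ gap_ge0].
have := gap_ge0 _ (bounded_map_l2 (bounded_V R) (l2_delta0 R)).
rewrite ip_root_gap lecR subr_ge0 leNgt ltr_sqrt ?ltr0n //.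
by rewrite ltr_pdivrMr ?ltr0n // divr1 -natrM ltr_nat.
Qed.
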